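(* Let $n,h\ge 2$ be integers (number of alternatives and number of individuals) and let $M$ be the Minimax social choice correspondence. Define $T_1=\{(h,n): h\le 3\}\cup\{(h,n): n\le 3\}\cup\{(4,4),(5,4),(7,4),(5,5)\}$, $T_2=\{(h,n): h=2\}\cup\{(h,n): n\le 3\}\cup\{(4,4)\}$, $T_3=\{(h,n): n=2\}\cup\{(3,3)\}$ (all sets of pairs of integers $\ge 2$). Then for each $j\in\{1,2,3\}$: $M$ is immune to the reversal bias of type $j$ if and only if $(h,n)\in T_j$.
   Context: Let $N=\{1,\dots,n\}$ be the set of alternatives and $H=\{1,\dots,h\}$ the set of individuals. A preference relation is a linear order on $N$; a preference profile is an $h$-tuple $p=(p_1,\dots,p_h)$ of linear orders on $N$, and $\mathcal P$ is the set of all profiles. For a linear order $q$, $q^r$ is the reversed order ($x$ above $y$ in $q^r$ iff $y$ above $x$ in $q$), and $p^r=(p_1^r,\dots,p_h^r)$. Write $x>_{p_i}y$ if $x\neq y$ and $x$ is ranked above $y$ by $p_i$. A social choice correspondence (SCC) is a function from $\mathcal P$ to the nonempty subsets of $N$. The Minimax SCC is $M(p)=\mathrm{argmin}_{x\in N}\max_{y\in N\setminus\{x\}}|\{i\in H: y>_{p_i}x\}|$. An SCC $C$ suffers the reversal bias of type 1 if there exist $p\in\mathcal P$ and $x\in N$ with $C(p)=C(p^r)=\{x\}$; of type 2 if there exists $p$ with $|C(p)|=1$ and $C(p)\cap C(p^r)\neq\varnothing$; of type 3 if there exists $p$ with $|C(p)|<n$ and $C(p)\cap C(p^r)\neq\varnothing$.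 $C$ is immune to the reversal bias of type $j$ if it does not suffer it. *)

From mathcomp Require Import all_boot all_fingroup.
Set Implicit Arguments. Unset Strict Implicit. Unset Printing Implicit Defensive.

(* Alternatives N = 'I_n, individuals H = 'I_h.
   A linear order on 'I_n is encoded by a permutation q : {perm 'I_n},
   where q x is the rank of x (rank 0 = top). *)
Definition linord (n : nat) := {perm 'I_n}.

Definition prefers n (q : linord n) (x y : 'I_n) : bool := (q x < q y)%N.

Definition rev_linord n (q : linord n) : linord n :=
  perm (inj_comp (@rev_ord_inj n) (@perm_inj _ q)).

Definition profile (h n : nat) := {ffun 'I_h -> linord n}.

Definition rev_profile h n (p : profile h n) : profile h n :=
  [ffun i => rev_linord (p i)].

Definition SCC (h n : nat) := profile h n -> {set 'I_n}.

Definition beats h n (p : profile h n) (y x : 'I_n) : nat :=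
  #|[set i : 'I_h | prefers (p i) y x]|.

Definition maxscore h n (p : profile h n) (x : 'I_n) : nat :=
  \max_(y | y != x) beats p y x.

Definition minimax h n : SCC h n :=
  fun p => [set x | [forall y, maxscore p x <= maxscore p y]].

Definition suffers1 h n (C : SCC h n) : Prop :=
  exists (p : profile h n) (x : 'I_n), C p = [set x] /\ C (rev_profile p) = [set x].
Definition suffers2 h n (C : SCC h n) : Prop :=
  exists p : profile h n, #|C p| = 1 /\ C p :&: C (rev_profile p) != set0.
Definition suffers3 h n (C : SCC h n) : Prop :=
  exists p : profile h n, #|C p| < n /\ C p :&: C (rev_profile p) != set0.

Definition T1 (h n : nat) : bool :=
  [|| h <= 3, n <= 3, (h == 4) && (n == 4), (h == 5) && (n == 4),
      (h == 7) && (n == 4) | (h == 5) && (n == 5)].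
Definition T2 (h n : nat) : bool :=
  [|| h == 2, n <= 3 | (h == 4) && (n == 4)].
Definition T3 (h n : nat) : bool :=
  (n == 2) || ((h == 3) && (n == 3)).

From mathcomp Require Import all_boot all_fingroup zify.
Set Implicit Arguments. Unset Strict Implicit. Unset Printing Implicit Defensive.

(* Let x be the unique Minimax winner of p and a winner of its reversal, with
   maximal defeats m in p and m' in the reversal, so that h <= m + m'.  If every
   other alternative y has maximal defeat at least K > m' (take K = m + 1 when
   m' <= m), then the heaviest defeat of y is inflicted by some z_y <> x.  Each
   voter ranks z_y above y for at most n - 2 of the alternatives y <> x, since
   its favourite alternative besides x is not among them; summing over voters,
   (n-1) K <= h (n-2).  When m < m' the same count works in the reversed profile
   with K = m'.  These bounds exclude the pairs of T_1 and T_2; for T_3, type 3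
   is type 2 when n = 2, and (3,3) follows from the constraints on pairwise
   counts among three alternatives.
   Conversely, adding a voter together with its reversal raises every pairwise
   count by one, and cloning a non-winner y0 just below itself in every ranking
   preserves the winners of both the profile and its reversal; so the bias
   spreads from explicit profiles at the minimal pairs outside T_j. *)

Lemma bigmax_succ (I : finType) (P : pred I) (F : I -> nat) i0 : P i0 ->
  \max_(i | P i) (F i).+1 = (\max_(i | P i) F i).+1.
Proof.
move=> Pi0; apply/eqP; rewrite eqn_leq; apply/andP; split.
  by apply/bigmax_leqP => i Pi; rewrite ltnS (leq_bigmax_cond i Pi).
rewrite (bigmax_eq_arg i0 Pi0); case: arg_maxnP => // j Pj _.
exact: (bigmax_sup j Pj).
Qed.

Lemma exists_neq n (x : 'I_n) : 1 < n -> exists y, y != x.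
Proof.
move=> n_gt1; have : 0 < #|predC1 x| by rewrite cardC1 card_ord; lia.
by case/card_gt0P => y; exists y.
Qed.

Lemma card_neq2 n (x t : 'I_n) : t != x -> #|[pred y | (y != x) && (y != t)]| = n - 2.
Proof.
move=> ntx; apply/eqP; rewrite -(eqn_add2l 1) -(cardD1x (A := predC1 x) ntx).
rewrite cardC1 card_ord; move: ntx; rewrite -(inj_eq val_inj) /=.
by have := ltn_ord x; have := ltn_ord t; lia.
Qed.

Section Orders.
Variable n : nat.
Implicit Types (q : linord n) (x y : 'I_n).

Lemma prefers_rev q x y : prefers (rev_linord q) x y = prefers q y x.
Proof.
rewrite /prefers /rev_linord !permE /=.
have := ltn_ord (q x); have := ltn_ord (q y); lia.
Qed.

Lemma prefersxx q x : prefers q x x = false.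
Proof. exact: ltnn. Qed.

Lemma prefers_asym q x y : x != y -> prefers q x y = ~~ prefers q y x.
Proof.
by move=> nxy; rewrite /prefers -leqNgt ltn_neqAle (inj_eq val_inj) (inj_eq perm_inj) nxy.
Qed.

Lemma rev_linordK : involutive (@rev_linord n).
Proof. by move=> q; apply/permP => x; rewrite /rev_linord !permE /= permE /= rev_ordK. Qed.

End Orders.

Lemma rev_profileK h n : involutive (@rev_profile h n).
Proof. by move=> p; apply/ffunP => i; rewrite !ffunE rev_linordK. Qed.

Section Scores.
Variables h n : nat.
Implicit Types (p : profile h n) (x y : 'I_n).

Lemma beats_rev p y x : beats (rev_profile p) y x = beats p x y.
Proof. by apply: eq_card => i; rewrite !inE ffunE prefers_rev. Qed.

Lemma leq_beats p y x : beats p y x <= h.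
Proof. by rewrite /beats -[X in _ <= X]card_ord max_card. Qed.

Lemma beats_compl p y x : y != x -> beats p y x + beats p x y = h.
Proof.
move=> nyx; rewrite /beats -[RHS]card_ord -(cardsC [set i | prefers (p i) y x]).
by congr (_ + _); apply: eq_card => i; rewrite !inE (prefers_asym _ nyx) negbK.
Qed.

Lemma beatsxx p x : beats p x x = 0.
Proof. by apply: eq_card0 => i; rewrite !inE prefersxx. Qed.

Lemma beatsE p y x : beats p y x = \sum_(i < h) prefers (p i) y x.
Proof.
by rewrite /beats -sum1_card big_mkcond; apply: eq_bigr => i _; rewrite inE; case: prefers.
Qed.

Lemma leq_beats_maxscore p x y : y != x -> beats p y x <= maxscore p x.
Proof. by move=> nyx; rewrite /maxscore (leq_bigmax_cond y). Qed.

Lemma maxscore_le_h p x : maxscore p x <= h.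
Proof. by apply/bigmax_leqP => y _; apply: leq_beats. Qed.

Lemma maxscore_attained p x : 1 < n -> exists2 y, y != x & beats p y x = maxscore p x.
Proof.
move=> n_gt1; have [y0 ny0x] := exists_neq x n_gt1.
exists [arg max_(y > y0 | y != x) beats p y x]; first by case: arg_maxnP.
by rewrite /maxscore (bigmax_eq_arg y0).
Qed.

Lemma maxscore_rev p x : maxscore (rev_profile p) x = \max_(y | y != x) beats p x y.
Proof. by apply: eq_bigr => y _; rewrite beats_rev. Qed.

Lemma leq_h_maxscoreD p x : 1 < n -> h <= maxscore p x + maxscore (rev_profile p) x.
Proof.
move=> n_gt1; have [y nyx] := exists_neq x n_gt1.
have := leq_beats_maxscore (rev_profile p) nyx; rewrite beats_rev.
have := leq_beats_maxscore p nyx; have := beats_compl p nyx; lia.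
Qed.

Lemma minimaxP p x : reflect (forall y, maxscore p x <= maxscore p y) (x \in minimax p).
Proof. rewrite inE; exact: forallP. Qed.

Lemma notin_minimax_lt p x y : x \in minimax p -> y \notin minimax p ->
  maxscore p x < maxscore p y.
Proof.
move=> /minimaxP x_min; rewrite inE negb_forall => /existsP [z].
by rewrite -ltnNge; apply: leq_ltn_trans.
Qed.

Lemma minimax1_lt p x y : minimax p = [set x] -> y != x -> maxscore p x < maxscore p y.
Proof. by move=> Mx nyx; apply: notin_minimax_lt; rewrite Mx inE ?eqxx. Qed.

End Scores.

Section Counting.
Variables h n : nat.
Implicit Types (p : profile h n) (x y : 'I_n).

Lemma sum_prefers_outside_le (q : linord n) x (f : 'I_n -> 'I_n) : 1 < n ->
  (forall y, y != x -> f y != x) -> \sum_(y in predC1 x) prefers q (f y) y <= n - 2.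
Proof.
move=> n_gt1 f_neq; have [y0 ny0x] := exists_neq x n_gt1.
case: (@arg_minnP _ y0 (predC1 x) (fun y => q y : nat) ny0x) => t ntx t_top.
rewrite (bigD1 t ntx) /= [prefers _ _ _]ltnNge t_top /=; last exact: f_neq.
by rewrite -(card_neq2 ntx) -sum1_card add0n; apply: leq_sum => y _; case: prefers.
Qed.

Lemma beaten_by_others_bound p x k : 1 < n ->
  (forall y, y != x -> exists2 z, (z != x) && (z != y) & k <= beats p z y) ->
  n.-1 * k <= h * (n - 2).
Proof.
move=> n_gt1 beaten.
have [f f_beats] : exists f : 'I_n -> 'I_n,
    forall y, y != x -> [&& f y != x, f y != y & k <= beats p (f y) y].
  suff /fin_all_exists : forall y, exists z : 'I_n,
      y != x -> [&& z != x, z != y & k <= beats p z y] by [].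
  move=> y; case: (eqVneq y x) => [-> | nyx]; first by exists x.
  by have [z /andP [zx zy] kz] := beaten y nyx; exists z => _; apply/and3P.
apply: (@leq_trans (\sum_(y in predC1 x) beats p (f y) y)).
  rewrite -{1}(card_ord n) -(cardC1 x) -sum_nat_const; apply: leq_sum => y nyx.
  by case/and3P: (f_beats y nyx).
under eq_bigr => y _ do rewrite beatsE.
rewrite exchange_big /= -[h in h * _]card_ord -sum_nat_const; apply: leq_sum => i _.
by apply: sum_prefers_outside_le => // y nyx; case/and3P: (f_beats y nyx).
Qed.

Lemma maxscore_gap_bound p x K : 1 < n ->
  (forall y, y != x -> K <= maxscore p y) -> maxscore (rev_profile p) x < K ->
  n.-1 * K <= h * (n - 2).
Proof.
move=> n_gt1 K_le x_lt; apply: (beaten_by_others_bound (p := p) (x := x)) => // y nyx.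
have [z nzy z_max] := maxscore_attained p y n_gt1.
exists z; last by rewrite z_max K_le.
rewrite eq_sym nzy andbT; apply: contraTneq x_lt => xz.
rewrite -leqNgt (leq_trans (K_le y nyx)) // -z_max -xz -beats_rev.
exact: leq_beats_maxscore.
Qed.

End Counting.

Section Necessity.
Variables h n : nat.
Hypothesis n_gt1 : 1 < n.
Implicit Types (p : profile h n) (x y : 'I_n).

Lemma minimax1_bound p x : minimax p = [set x] ->
  maxscore (rev_profile p) x <= maxscore p x -> n.-1 * (maxscore p x).+1 <= h * (n - 2).
Proof.
move=> Mx r_le; apply: (maxscore_gap_bound (p := p) (x := x)) => // y nyx.
exact: minimax1_lt Mx nyx.
Qed.

Lemma suffers1_bound : suffers1 (@minimax h n) ->
  exists2 K, h.+2 <= 2 * K & n.-1 * K <= h * (n - 2).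
Proof.
move=> [p [x [Mx Mrx]]].
wlog r_le : p Mx Mrx / maxscore (rev_profile p) x <= maxscore p x.
  move=> IH; case: (leqP (maxscore (rev_profile p) x) (maxscore p x)) => [|/ltnW r_le].
    exact: IH p Mx Mrx.
  by apply: (IH (rev_profile p)); rewrite ?rev_profileK.
exists (maxscore p x).+1; last exact: minimax1_bound.
by have := leq_h_maxscoreD p x n_gt1; lia.
Qed.

Lemma suffers2_bound : suffers2 (@minimax h n) ->
  exists2 K, h < 2 * K & n.-1 * K <= h * (n - 2).
Proof.
move=> [p [/eqP/cards1P [x Mx] /set0Pn [v]]].
rewrite inE Mx inE => /andP [/eqP -> Mrx].
have h_le := leq_h_maxscoreD p x n_gt1.
case: (leqP (maxscore (rev_profile p) x) (maxscore p x)) => [r_le | lt_r].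
  by exists (maxscore p x).+1; [lia | exact: minimax1_bound].
exists (maxscore (rev_profile p) x); first lia.
apply: (maxscore_gap_bound (p := rev_profile p) (x := x)); rewrite ?rev_profileK //.
by move=> y _; move/minimaxP: Mrx.
Qed.

End Necessity.

Lemma suffers3_2 h : suffers3 (@minimax h 2) -> suffers2 (@minimax h 2).
Proof.
move=> [p [card_lt meet]]; exists p; split => //.
have [x /setIP [xM _]] := set0Pn _ meet.
have : 0 < #|minimax p| by apply/card_gt0P; exists x.
by move: card_lt; lia.
Qed.

Lemma beats_cycle h n (p : profile h n) a b c : a != b -> b != c -> c != a ->
  h <= beats p a b + beats p b c + beats p c a <= 2 * h.
Proof.
move=> nab nbc nca; rewrite !beatsE -!big_split /=.
have voter i : 1 <= prefers (p i) a b + prefers (p i) b c + prefers (p i) c a <= 2.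
  have rank_neq u v : u != v -> (p i u : nat) != p i v.
    by move=> nuv; rewrite (inj_eq val_inj) (inj_eq perm_inj).
  move: (rank_neq _ _ nab) (rank_neq _ _ nbc) (rank_neq _ _ nca); rewrite /prefers; lia.
apply/andP; split.
  apply: (@leq_trans (\sum_(i < h) 1)); first by rewrite sum1_card card_ord.
  by apply: leq_sum => i _; case/andP: (voter i).
apply: (@leq_trans (\sum_(i < h) 2)); last by rewrite sum_nat_const card_ord mulnC.
by apply: leq_sum => i _; case/andP: (voter i).
Qed.

Lemma maxscore3 h (p : profile h 3) x y z : y != x -> z != x -> z != y ->
  maxscore p x = maxn (beats p y x) (beats p z x).
Proof.
move=> nyx nzx nzy; rewrite /maxscore (bigD1 y nyx) (bigD1 z) /=; last by rewrite nzx nzy.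
rewrite big_pred0 ?maxn0 // => v; apply/negP => /andP [/andP [nvx nvy] nvz].
move: nvx nvy nvz nyx nzx nzy; rewrite -!(inj_eq val_inj) /=.
by have := ltn_ord v; have := ltn_ord x; have := ltn_ord y; have := ltn_ord z; lia.
Qed.

Lemma immune3_3_3 : ~ suffers3 (@minimax 3 3).
Proof.
move=> [p [card_lt /set0Pn [x /setIP [xM xMr]]]].
have [w wM] : exists w, w \notin minimax p.
  apply/existsP; rewrite -negb_forall; apply: contraTN card_lt => /forallP all_in.
  by rewrite -leqNgt -{1}(card_ord 3) -cardsT subset_leq_card //; apply/subsetP => v _.
have nwx : w != x by apply: contraNneq wM => ->.
have /card_gt0P [z /andP [nzx nzw]] : 0 < #|[pred y | (y != x) && (y != w)]|.
  by rewrite card_neq2.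
have nxw : x != w by rewrite eq_sym.
have nxz : x != z by rewrite eq_sym.
have nwz : w != z by rewrite eq_sym.
have := notin_minimax_lt xM wM; have := minimaxP _ _ xM z.
have := minimaxP _ _ xMr w; have := minimaxP _ _ xMr z.
rewrite !(maxscore3 _ nwx nzx nzw) !(maxscore3 _ nxw nzw nzx) !(maxscore3 _ nxz nwz nwx).
rewrite !beats_rev.
have := beats_compl p nwx; have := beats_compl p nzx; have := beats_compl p nzw.
have := beats_cycle p nxw nwz nzx; lia.
Qed.

Section AddPair.
Variables h n : nat.
Hypothesis n_gt1 : 1 < n.
Implicit Types (p : profile h n) (q : linord n) (x y : 'I_n).

Definition add_pair p q : profile (h + 2) n :=
  [ffun i => if split i is inl j then p j else if split i == inr ord0 then q else rev_linord q].

Lemma rev_add_pair p q : rev_profile (add_pair p q) = add_pair (rev_profile p) (rev_linord q).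
Proof.
apply/ffunP => i; rewrite !ffunE; case: split => j; first by rewrite ffunE.
by case: ifP; rewrite ?rev_linordK.
Qed.

Lemma beats_add_pair p q y x : y != x -> beats (add_pair p q) y x = (beats p y x).+1.
Proof.
move=> nyx; rewrite !beatsE big_split_ord /= !big_ord_recr big_ord0 /= !ffunE.
have splitr k : split (rshift h k) = inr k by exact: (unsplitK (inr _ k)).
rewrite !splitr /= prefers_rev (prefers_asym _ nyx).
under eq_bigr => i _ do rewrite ffunE (unsplitK (inl _ i)).
by case: prefers; rewrite /= ?addn0 ?addn1.
Qed.

Lemma minimax_add_pair p q : minimax (add_pair p q) = minimax p.
Proof.
have ms_add x : maxscore (add_pair p q) x = (maxscore p x).+1.
  have [y nyx] := exists_neq x n_gt1.
  rewrite /maxscore -(bigmax_succ _ (i0 := y)) //; apply: eq_bigr => v nvx.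
  exact: beats_add_pair.
by apply/setP => x; rewrite !inE; apply: eq_forallb => y; rewrite !ms_add.
Qed.

End AddPair.

Lemma suffers1_add_pair h n :
  1 < n -> suffers1 (@minimax h n) -> suffers1 (@minimax (h + 2) n).
Proof. by move=> n_gt1 [p Mp]; exists (add_pair p 1%g); rewrite rev_add_pair !minimax_add_pair. Qed.

Lemma suffers2_add_pair h n :
  1 < n -> suffers2 (@minimax h n) -> suffers2 (@minimax (h + 2) n).
Proof. by move=> n_gt1 [p Mp]; exists (add_pair p 1%g); rewrite rev_add_pair !minimax_add_pair. Qed.

Lemma suffers3_add_pair h n :
  1 < n -> suffers3 (@minimax h n) -> suffers3 (@minimax (h + 2) n).
Proof. by move=> n_gt1 [p Mp]; exists (add_pair p 1%g); rewrite rev_add_pair !minimax_add_pair. Qed.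

Lemma bigmax_lift_ord_max n (P : pred 'I_n.+1) (F : 'I_n.+1 -> nat) :
  \max_(v | P v) F v =
  maxn (\max_(a : 'I_n | P (lift ord_max a)) F (lift ord_max a))
       (if P ord_max then F ord_max else 0).
Proof.
rewrite big_mkcond big_ord_recr /= [in RHS]big_mkcond; congr maxn; apply: eq_bigr => a _.
have -> // : widen_ord (leqnSn n) a = lift ord_max a.
by apply: val_inj; rewrite /= /bump leqNgt ltn_ord.
Qed.

Section Clone.
Variables (h n : nat) (y0 : 'I_n).
Implicit Types (p : profile h n) (q : linord n) (a b x : 'I_n).
Local Notation old := (@lift n.+1 ord_max).
Local Notation new := (@ord_max n).

(* The old alternatives are renumbered [lift ord_max a]; the new one, [ord_max],
   is ranked immediately below y0. *)
Definition clone_fun q (w : 'I_n.+1) : 'I_n.+1 :=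
  if unlift new w is Some a then lift (lift ord0 (q y0)) (q a) else lift ord0 (q y0).

Lemma clone_fun_inj q : injective (clone_fun q).
Proof.
move=> w1 w2; rewrite /clone_fun.
case: (unliftP new w1) => [a1 ->|->]; case: (unliftP new w2) => [a2 ->|->] //.
- by move/lift_inj/perm_inj => ->.
- by move=> E; have := neq_lift (lift ord0 (q y0)) (q a1); rewrite E eqxx.
- by move=> E; have := neq_lift (lift ord0 (q y0)) (q a2); rewrite -E eqxx.
Qed.

Definition clone q : linord n.+1 := perm (@clone_fun_inj q).

Lemma clone_old q a : (clone q (old a) : nat) = bump (q y0).+1 (q a).
Proof. by rewrite permE /clone_fun liftK. Qed.

Lemma clone_new q : (clone q new : nat) = (q y0).+1.
Proof. by rewrite permE /clone_fun unlift_none. Qed.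

Lemma prefers_clone_old q a b : prefers (clone q) (old a) (old b) = prefers q a b.
Proof. by rewrite /prefers !clone_old /bump; case: leqP; case: leqP; lia. Qed.

Lemma prefers_clone_new_old q b : prefers (clone q) new (old b) = prefers q y0 b.
Proof. by rewrite /prefers clone_old clone_new /bump; case: leqP; lia. Qed.

Lemma prefers_clone_old_new q a : prefers (clone q) (old a) new = (q a <= q y0).
Proof. by rewrite /prefers clone_old clone_new /bump; case: leqP; lia. Qed.

Definition clone_profile p : profile h n.+1 := [ffun i => clone (p i)].

Lemma beats_clone_old p a b : beats (clone_profile p) (old a) (old b) = beats p a b.
Proof. by apply: eq_card => i; rewrite !inE ffunE prefers_clone_old. Qed.

Lemma beats_clone_new_old p b : beats (clone_profile p) new (old b) = beats p y0 b.
Proof. by apply: eq_card => i; rewrite !inE ffunE prefers_clone_new_old. Qed.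

Lemma beats_clone_old_new p a : a != y0 -> beats (clone_profile p) (old a) new = beats p a y0.
Proof.
move=> nay; apply: eq_card => i; rewrite !inE ffunE prefers_clone_old_new /prefers leq_eqVlt.
by rewrite (inj_eq val_inj) (inj_eq perm_inj) (negbTE nay).
Qed.

Lemma beats_clone_y0_new p : beats (clone_profile p) (old y0) new = h.
Proof.
rewrite /beats -[RHS]card_ord -cardsT; apply: eq_card => i.
by rewrite !inE ffunE prefers_clone_old_new leqnn.
Qed.

Lemma maxscore_clone_old p a : maxscore (clone_profile p) (old a) = maxscore p a.
Proof.
rewrite /maxscore bigmax_lift_ord_max neq_lift beats_clone_new_old.
rewrite (eq_bigl (fun b => b != a)) => [|b]; last by rewrite (inj_eq lift_inj).
under eq_bigr => b _ do rewrite beats_clone_old.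
case: (eqVneq a y0) => [->|nay]; first by rewrite beatsxx maxn0.
by apply/maxn_idPl; apply: leq_beats_maxscore; rewrite eq_sym.
Qed.

Lemma maxscore_clone_new p : maxscore (clone_profile p) new = h.
Proof.
apply/eqP; rewrite eqn_leq maxscore_le_h -{1}(beats_clone_y0_new p).
by rewrite leq_beats_maxscore // eq_sym neq_lift.
Qed.

Lemma maxscore_rev_clone_old p a : a != y0 ->
  maxscore (rev_profile (clone_profile p)) (old a) = maxscore (rev_profile p) a.
Proof.
move=> nay; rewrite !maxscore_rev bigmax_lift_ord_max neq_lift beats_clone_old_new //.
rewrite (eq_bigl (fun b => b != a)) => [|b]; last by rewrite (inj_eq lift_inj).
under eq_bigr => b _ do rewrite beats_clone_old.
by apply/maxn_idPl; rewrite -beats_rev -maxscore_rev leq_beats_maxscore // eq_sym.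
Qed.

Lemma maxscore_rev_clone_y0 p : maxscore (rev_profile (clone_profile p)) (old y0) = h.
Proof.
apply/eqP; rewrite eqn_leq maxscore_le_h -{1}(beats_clone_y0_new p) -beats_rev.
by rewrite leq_beats_maxscore // neq_lift.
Qed.

Lemma maxscore_rev_clone_new p :
  maxscore (rev_profile (clone_profile p)) new = maxscore (rev_profile p) y0.
Proof.
rewrite !maxscore_rev bigmax_lift_ord_max eqxx maxn0.
apply/eqP; rewrite eqn_leq; apply/andP; split; apply/bigmax_leqP => b _.
  rewrite beats_clone_new_old; case: (eqVneq b y0) => [->|nby]; first by rewrite beatsxx.
  exact: (leq_bigmax_cond b).
by rewrite -(beats_clone_new_old p) (leq_bigmax_cond b) // eq_sym neq_lift.
Qed.

Lemma minimax_clone p : y0 \notin minimax p -> minimax (clone_profile p) = old @: minimax p.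
Proof.
move=> y0_out; apply/setP => w; case: (unliftP new w) => [a ->|->].
  rewrite mem_imset; last exact: lift_inj.
  apply/minimaxP/minimaxP => a_min b.
    by have := a_min (old b); rewrite !maxscore_clone_old.
  case: (unliftP new b) => [c ->|->]; first by rewrite !maxscore_clone_old.
  by rewrite maxscore_clone_old maxscore_clone_new maxscore_le_h.
have -> : (new \in old @: minimax p) = false.
  by apply/imsetP => [[a _ /eqP]]; rewrite (negbTE (neq_lift _ _)).
apply/negbTE; apply: contra y0_out => /minimaxP new_min; apply/minimaxP => v.
have := new_min (old v); rewrite maxscore_clone_new maxscore_clone_old.
exact: leq_trans (maxscore_le_h _ _).
Qed.

Lemma leq_maxscore_rev_clone p b :
  maxscore (rev_profile p) b <= maxscore (rev_profile (clone_profile p)) (old b).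
Proof.
case: (eqVneq b y0) => [->|nby]; last by rewrite maxscore_rev_clone_old.
by rewrite maxscore_rev_clone_y0 maxscore_le_h.
Qed.

Lemma maxscore_rev_clone_lb p m :
  (forall w, m <= maxscore (rev_profile (clone_profile p)) w) ->
  forall v, m <= maxscore (rev_profile p) v.
Proof.
move=> m_le v; case: (eqVneq v y0) => [->|nvy];
  [rewrite -maxscore_rev_clone_new | rewrite -(maxscore_rev_clone_old p nvy)]; exact: m_le.
Qed.

Lemma minimax_rev_clone p x : x != y0 ->
  (old x \in minimax (rev_profile (clone_profile p))) = (x \in minimax (rev_profile p)).
Proof.
move=> nxy; apply/minimaxP/minimaxP => x_min.
  by apply: maxscore_rev_clone_lb; rewrite -(maxscore_rev_clone_old p nxy).
rewrite (maxscore_rev_clone_old p nxy) => w.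
case: (unliftP new w) => [b ->|->]; last by rewrite maxscore_rev_clone_new.
exact: leq_trans (x_min b) (leq_maxscore_rev_clone p b).
Qed.

Lemma minimax_rev_clone1 p x : minimax (rev_profile p) = [set x] -> x != y0 ->
  minimax (rev_profile (clone_profile p)) = [set old x].
Proof.
move=> Mrx nxy; apply/setP => w; rewrite in_set1; apply/idP/eqP => [|->]; last first.
  by rewrite minimax_rev_clone // Mrx set11.
case: (unliftP new w) => [b ->|->] /minimaxP w_min.
  congr old; apply/set1P; rewrite -Mrx; apply/minimaxP => v.
  exact: leq_trans (leq_maxscore_rev_clone p b) (maxscore_rev_clone_lb w_min v).
have : y0 \in minimax (rev_profile p).
  by apply/minimaxP; rewrite -maxscore_rev_clone_new; exact: maxscore_rev_clone_lb.
by rewrite Mrx inE eq_sym (negbTE nxy).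
Qed.

End Clone.

Lemma suffers1_clone h n : 1 < n -> suffers1 (@minimax h n) -> suffers1 (@minimax h n.+1).
Proof.
move=> n_gt1 [p [x [Mx Mrx]]]; have [y0 ny0x] := exists_neq x n_gt1.
exists (clone_profile y0 p), (lift ord_max x); split.
  by rewrite minimax_clone Mx ?imset_set1 // inE.
by rewrite (minimax_rev_clone1 Mrx) // eq_sym.
Qed.

Lemma suffers2_clone h n : 1 < n -> suffers2 (@minimax h n) -> suffers2 (@minimax h n.+1).
Proof.
move=> n_gt1 [p [/eqP/cards1P [x Mx] /set0Pn [v]]].
rewrite inE Mx inE => /andP [/eqP -> Mrx]; have [y0 ny0x] := exists_neq x n_gt1.
exists (clone_profile y0 p); rewrite minimax_clone Mx ?inE // imset_set1 cards1; split => //.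
by apply/set0Pn; exists (lift ord_max x); rewrite in_setI set11 minimax_rev_clone // eq_sym.
Qed.

Lemma suffers3_clone h n : suffers3 (@minimax h n) -> suffers3 (@minimax h n.+1).
Proof.
move=> [p [card_lt /set0Pn [x /setIP [xM xMr]]]].
have [y0 y0_out] : exists y0, y0 \notin minimax p.
  apply/existsP; rewrite -negb_forall; apply: contraTN card_lt => /forallP all_in.
  by rewrite -leqNgt -{1}(card_ord n) -cardsT subset_leq_card //; apply/subsetP => v _.
have nxy0 : x != y0 by apply: contraNneq y0_out => <-.
exists (clone_profile y0 p); rewrite minimax_clone // card_imset; last exact: lift_inj.
split; first exact: leq_trans card_lt _.
apply/set0Pn; exists (lift ord_max x).
by rewrite in_setI mem_imset ?minimax_rev_clone ?xM //; exact: lift_inj.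
Qed.

Lemma suffers1_suffers2 h n : suffers1 (@minimax h n) -> suffers2 (@minimax h n).
Proof.
move=> [p [x [Mx Mrx]]]; exists p; rewrite Mx cards1; split => //.
by apply/set0Pn; exists x; rewrite Mrx setIid set11.
Qed.

Lemma suffers2_suffers3 h n : 1 < n -> suffers2 (@minimax h n) -> suffers3 (@minimax h n).
Proof. by move=> n_gt1 [p [card1 meet]]; exists p; rewrite card1. Qed.

Lemma bias_bound_large h n K :
  1 < n -> h < 2 * K -> n.-1 * K <= h * (n - 2) -> K < h /\ 3 < n.
Proof. by move=> n_gt1 hK Kb; split; nia. Qed.

Lemma immune1_of_T1 h n : 1 < n -> T1 h n -> ~ suffers1 (@minimax h n).
Proof.
move=> n_gt1 T /(suffers1_bound n_gt1) [K hK Kb].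
have [K_lt n_gt3] := bias_bound_large n_gt1 (ltnW hK) Kb.
have [[Eh En]|[[Eh En]|[[Eh En]|[Eh En]]]] :
    (h = 4 /\ n = 4) \/ (h = 5 /\ n = 4) \/ (h = 7 /\ n = 4) \/ (h = 5 /\ n = 5).
  by move: T; rewrite /T1; lia.
all: by rewrite Eh En /= in Kb; lia.
Qed.

Lemma immune2_of_T2 h n : 1 < n -> T2 h n -> ~ suffers2 (@minimax h n).
Proof.
move=> n_gt1 T /(suffers2_bound n_gt1) [K hK Kb].
have [K_lt n_gt3] := bias_bound_large n_gt1 hK Kb.
have [Eh En] : h = 4 /\ n = 4 by move: T; rewrite /T2; lia.
by rewrite Eh En /= in Kb; lia.
Qed.

Lemma immune3_of_T3 h n : 1 < n -> T3 h n -> ~ suffers3 (@minimax h n).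
Proof.
move=> n_gt1 /orP [/eqP En | /andP [/eqP -> /eqP ->]]; last exact: immune3_3_3.
by subst n => /suffers3_2; apply: immune2_of_T2 => //; apply/orP; right.
Qed.

Section ProfilesOfSeqs.
Variables h n' : nat.
Local Notation n := n'.+1.

(* [s] lists the ranks of the alternatives 0, ..., n-1 (rank 0 = top). *)
Definition is_ranking (s : seq nat) := perm_eq s (iota 0 n).

Lemma is_ranking_nth s (x : 'I_n) : is_ranking s -> nth 0 s x < n.
Proof.
move=> rank_s; have : nth 0 s x \in iota 0 n.
  by rewrite -(perm_mem rank_s) mem_nth // (perm_size rank_s) size_iota.
by rewrite mem_iota.
Qed.

Lemma ranking_inj s : is_ranking s -> injective (fun x : 'I_n => inord (nth 0 s x) : 'I_n).
Proof.
move=> rank_s x y /(congr1 val); rewrite /= !inordK ?is_ranking_nth // => /eqP.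
rewrite nth_uniq ?(perm_size rank_s) ?size_iota ?(perm_uniq rank_s) ?iota_uniq //.
by move/eqP/val_inj.
Qed.

Definition linord_of_seq s : linord n :=
  if is_ranking s =P true is ReflectT rank_s then perm (ranking_inj rank_s) else 1%g.

Lemma linord_of_seqE s x : is_ranking s -> (linord_of_seq s x : nat) = nth 0 s x.
Proof.
move=> rank_s; rewrite /linord_of_seq; case: eqP => [rank_s'|]; last by rewrite rank_s.
by rewrite permE inordK ?is_ranking_nth.
Qed.

Definition profile_of_seqs (L : seq (seq nat)) : profile h n :=
  [ffun i : 'I_h => linord_of_seq (nth [::] L i)].

Definition beats_seq L y x := count (fun s => nth 0 s y < nth 0 s x) L.

Definition score_seq (B : nat -> nat -> nat) x :=
  foldr maxn 0 [seq B y x | y <- iota 0 n & y != x].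

Definition winner_seq B x := all (fun y => score_seq B x <= score_seq B y) (iota 0 n).

Definition rev_beats_seq L y x := beats_seq L x y.

Definition unique_winner_seq B x0 :=
  all (fun x => winner_seq B x == (x == x0)) (iota 0 n).

Lemma bigmax_neq_iota (F : nat -> nat) (x : 'I_n) :
  \max_(y : 'I_n | y != x) F y = foldr maxn 0 [seq F y | y <- iota 0 n & y != nat_of_ord x].
Proof.
rewrite foldrE big_map big_filter -[iota 0 n]/(index_iota 0 n) big_mkord.
by apply: eq_bigl => y; rewrite -(inj_eq val_inj).
Qed.

Lemma bigmax_score_seq (F : 'I_n -> nat) (B : nat -> nat -> nat) (x : 'I_n) :
  (forall y : 'I_n, F y = B y x) -> \max_(y | y != x) F y = score_seq B x.
Proof.
move=> FB; rewrite (eq_bigr (fun y : 'I_n => B y x)) => [|y _]; last exact: FB.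
exact: (bigmax_neq_iota (B^~ x)).
Qed.

Lemma forall_iota (P : nat -> bool) : [forall y : 'I_n, P y] = all P (iota 0 n).
Proof.
apply/forallP/allP => [P_all y|P_all y]; last by apply: P_all; rewrite mem_iota ltn_ord.
by rewrite mem_iota add0n => y_lt; exact: (P_all (Ordinal y_lt)).
Qed.

Lemma mem_minimax_score_seq (p : profile h n) B (x : 'I_n) :
  (forall y : 'I_n, maxscore p y = score_seq B y) -> (x \in minimax p) = winner_seq B x.
Proof.
by move=> msB; rewrite inE /winner_seq -forall_iota; apply: eq_forallb => y; rewrite !msB.
Qed.

Lemma set1_unique_winner_seq (A : {set 'I_n}) B x0 : x0 < n ->
  (forall x : 'I_n, (x \in A) = winner_seq B x) -> unique_winner_seq B x0 ->
  A = [set inord x0].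
Proof.
move=> x0_lt memA uw; apply/setP => x; rewrite memA in_set1.
have /allP /(_ x) := uw; rewrite mem_iota ltn_ord => /(_ isT) /eqP ->.
by rewrite -(inj_eq val_inj) /= inordK.
Qed.

Section Valid.
Variable L : seq (seq nat).
Hypotheses (size_L : size L = h) (rankings_L : all is_ranking L).

Lemma beats_profile_of_seqs (y x : 'I_n) : beats (profile_of_seqs L) y x = beats_seq L y x.
Proof.
rewrite beatsE /beats_seq -sum1_count (big_nth [::]) size_L big_mkord [RHS]big_mkcond.
apply: eq_bigr => i _; have rank_i : is_ranking (nth [::] L i).
  by apply: (allP rankings_L); rewrite mem_nth ?size_L.
by rewrite ffunE /prefers !linord_of_seqE //; case: ltnP.
Qed.

Lemma mem_minimax_seqs x :
  (x \in minimax (profile_of_seqs L)) = winner_seq (beats_seq L) x.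
Proof.
apply: mem_minimax_score_seq => y; apply: bigmax_score_seq => u.
exact: beats_profile_of_seqs.
Qed.

Lemma mem_minimax_rev_seqs x :
  (x \in minimax (rev_profile (profile_of_seqs L))) = winner_seq (rev_beats_seq L) x.
Proof.
apply: mem_minimax_score_seq => y; rewrite maxscore_rev; apply: bigmax_score_seq => u.
exact: beats_profile_of_seqs.
Qed.

Lemma suffers1_of_seqs x0 : x0 < n ->
  unique_winner_seq (beats_seq L) x0 -> unique_winner_seq (rev_beats_seq L) x0 ->
  suffers1 (@minimax h n).
Proof.
move=> x0_lt uw uwr; exists (profile_of_seqs L), (inord x0).
split; first exact: set1_unique_winner_seq x0_lt mem_minimax_seqs uw.
exact: set1_unique_winner_seq x0_lt mem_minimax_rev_seqs uwr.
Qed.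

Lemma suffers2_of_seqs x0 : x0 < n ->
  unique_winner_seq (beats_seq L) x0 -> winner_seq (rev_beats_seq L) x0 ->
  suffers2 (@minimax h n).
Proof.
move=> x0_lt uw wr; exists (profile_of_seqs L).
rewrite (set1_unique_winner_seq x0_lt mem_minimax_seqs uw) cards1; split => //.
by apply/set0Pn; exists (inord x0); rewrite in_setI set11 mem_minimax_rev_seqs inordK.
Qed.

Lemma suffers3_of_seqs x0 w0 : x0 < n -> w0 < n ->
  winner_seq (beats_seq L) x0 -> winner_seq (rev_beats_seq L) x0 ->
  ~~ winner_seq (beats_seq L) w0 -> suffers3 (@minimax h n).
Proof.
move=> x0_lt w0_lt w wr nw; exists (profile_of_seqs L); split.
  suff /proper_card : minimax (profile_of_seqs L) \proper [set: 'I_n].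
    by rewrite cardsT card_ord.
  rewrite properT; apply/eqP => /setP /(_ (Ordinal w0_lt)).
  by rewrite in_setT mem_minimax_seqs (negbTE nw).
apply/set0Pn; exists (inord x0).
by rewrite in_setI mem_minimax_seqs mem_minimax_rev_seqs inordK ?w.
Qed.

End Valid.
End ProfilesOfSeqs.

Lemma suffers1_6_4 : suffers1 (@minimax 6 4).
Proof.
by apply: (@suffers1_of_seqs 6 3 [:: [:: 0; 1; 2; 3]; [:: 2; 3; 1; 0]; [:: 0; 1; 3; 2];
  [:: 2; 0; 3; 1]; [:: 2; 3; 0; 1]; [:: 3; 1; 0; 2]] _ _ 2); vm_compute.
Qed.

Lemma suffers1_4_5 : suffers1 (@minimax 4 5).
Proof.
by apply: (@suffers1_of_seqs 4 4 [:: [:: 4; 3; 0; 1; 2]; [:: 2; 1; 4; 3; 0]; [:: 0; 3; 4; 1; 2];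
  [:: 2; 1; 0; 3; 4]] _ _ 2); vm_compute.
Qed.

Lemma suffers1_9_4 : suffers1 (@minimax 9 4).
Proof.
by apply: (@suffers1_of_seqs 9 3 [:: [:: 1; 0; 3; 2]; [:: 3; 2; 0; 1]; [:: 1; 0; 3; 2];
  [:: 1; 3; 0; 2]; [:: 1; 3; 0; 2]; [:: 2; 0; 1; 3]; [:: 0; 2; 3; 1]; [:: 2; 1; 3; 0];
  [:: 3; 2; 1; 0]] _ _ 2); vm_compute.
Qed.

Lemma suffers1_7_5 : suffers1 (@minimax 7 5).
Proof.
by apply: (@suffers1_of_seqs 7 4 [:: [:: 1; 3; 4; 2; 0]; [:: 0; 1; 3; 2; 4]; [:: 4; 0; 2; 3; 1];
  [:: 4; 0; 1; 3; 2]; [:: 0; 1; 2; 3; 4]; [:: 3; 4; 0; 1; 2]; [:: 3; 4; 1; 0; 2]] _ _ 3);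
  vm_compute.
Qed.

Lemma suffers1_5_6 : suffers1 (@minimax 5 6).
Proof.
by apply: (@suffers1_of_seqs 5 5 [:: [:: 1; 4; 3; 5; 0; 2]; [:: 5; 4; 3; 0; 1; 2];
  [:: 4; 2; 1; 3; 5; 0]; [:: 0; 2; 1; 3; 4; 5]; [:: 5; 0; 4; 1; 2; 3]] _ _ 0); vm_compute.
Qed.

Lemma suffers2_3_4 : suffers2 (@minimax 3 4).
Proof.
by apply: (@suffers2_of_seqs 3 3 [:: [:: 1; 0; 2; 3]; [:: 1; 3; 0; 2]; [:: 1; 2; 3; 0]] _ _ 0);
  vm_compute.
Qed.

Lemma suffers2_6_4 : suffers2 (@minimax 6 4).
Proof. exact: suffers1_suffers2 suffers1_6_4. Qed.

Lemma suffers2_4_5 : suffers2 (@minimax 4 5).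
Proof. exact: suffers1_suffers2 suffers1_4_5. Qed.

Lemma suffers3_3_4 : suffers3 (@minimax 3 4).
Proof. exact: suffers2_suffers3 suffers2_3_4. Qed.

Lemma suffers3_2_3 : suffers3 (@minimax 2 3).
Proof. by apply: (@suffers3_of_seqs 2 2 [:: [:: 2; 1; 0]; [:: 1; 0; 2]] _ _ 2 0); vm_compute. Qed.

Lemma suffers3_5_3 : suffers3 (@minimax 5 3).
Proof.
by apply: (@suffers3_of_seqs 5 2 [:: [:: 0; 2; 1]; [:: 2; 1; 0]; [:: 1; 0; 2]; [:: 2; 1; 0];
  [:: 0; 2; 1]] _ _ 0 1); vm_compute.
Qed.

Lemma parity_grid_ind (S : nat -> nat -> Prop) h0 n0 h n :
  (forall h n, 1 < n -> S h n -> S (h + 2) n) -> (forall h n, 1 < n -> S h n -> S h n.+1) ->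
  S h0 n0 -> 1 < n0 -> h0 <= h -> odd h0 = odd h -> n0 <= n -> S h n.
Proof.
move=> S_add S_clone S0 n0_gt1 le_h odd_h le_n.
have [k ->] : exists k, h = h0 + 2 * k by exists ((h - h0)./2); lia.
have [d ->] : exists d, n = n0 + d by exists (n - n0); lia.
elim: d => [|d IH]; last by rewrite addnS; apply: S_clone => //; lia.
rewrite addn0; elim: k => [|k IH]; first by rewrite muln0 addn0.
by rewrite mulnSr addnA; apply: S_add.
Qed.

Lemma suffers1_of_notT1 h n : 1 < h -> 1 < n -> ~~ T1 h n -> suffers1 (@minimax h n).
Proof.
rewrite /T1 => h_gt1 n_gt1 notT.
have [[? [? ?]]|[[? [? ?]]|[[-> ?]|[[-> ?]|[-> ?]]]]] :
    (9 <= h /\ odd h /\ 3 < n) \/ (6 <= h /\ ~~ odd h /\ 3 < n) \/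
    (h = 7 /\ 4 < n) \/ (h = 5 /\ 5 < n) \/ (h = 4 /\ 4 < n) by lia.
- by apply: (parity_grid_ind suffers1_add_pair suffers1_clone suffers1_9_4); lia.
- by apply: (parity_grid_ind suffers1_add_pair suffers1_clone suffers1_6_4); lia.
- by apply: (parity_grid_ind suffers1_add_pair suffers1_clone suffers1_7_5); lia.
- by apply: (parity_grid_ind suffers1_add_pair suffers1_clone suffers1_5_6); lia.
- by apply: (parity_grid_ind suffers1_add_pair suffers1_clone suffers1_4_5); lia.
Qed.

Lemma suffers2_of_notT2 h n : 1 < h -> 1 < n -> ~~ T2 h n -> suffers2 (@minimax h n).
Proof.
rewrite /T2 => h_gt1 n_gt1 notT.
have [[? [? ?]]|[[? [? ?]]|[-> ?]]] :
    (3 <= h /\ odd h /\ 3 < n) \/ (6 <= h /\ ~~ odd h /\ 3 < n) \/ (h = 4 /\ 4 < n) by lia.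
- by apply: (parity_grid_ind suffers2_add_pair suffers2_clone suffers2_3_4); lia.
- by apply: (parity_grid_ind suffers2_add_pair suffers2_clone suffers2_6_4); lia.
- by apply: (parity_grid_ind suffers2_add_pair suffers2_clone suffers2_4_5); lia.
Qed.

Lemma suffers3_of_notT3 h n : 1 < h -> 1 < n -> ~~ T3 h n -> suffers3 (@minimax h n).
Proof.
rewrite /T3 => h_gt1 n_gt1 notT.
have clone3 h' n' (_ : 1 < n') := @suffers3_clone h' n'.
have [[? [? ?]]|[[? [? ?]]|[-> ?]]] :
    (5 <= h /\ odd h /\ 2 < n) \/ (2 <= h /\ ~~ odd h /\ 2 < n) \/ (h = 3 /\ 3 < n) by lia.
- by apply: (parity_grid_ind suffers3_add_pair clone3 suffers3_5_3); lia.
- by apply: (parity_grid_ind suffers3_add_pair clone3 suffers3_2_3); lia.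
- by apply: (parity_grid_ind suffers3_add_pair clone3 suffers3_3_4); lia.
Qed.

Lemma not_iffb (b : bool) (P : Prop) : (b -> ~ P) -> (~~ b -> P) -> (~ P <-> b).
Proof. by move=> immune suffers; split=> [nP | /immune //]; apply/negPn/negP => /suffers. Qed.

Theorem theorem1 (h n : nat) (hh : 2 <= h) (hn : 2 <= n) :
  (~ suffers1 (@minimax h n) <-> T1 h n) /\
  (~ suffers2 (@minimax h n) <-> T2 h n) /\
  (~ suffers3 (@minimax h n) <-> T3 h n).
Proof.
split; [|split]; apply: not_iffb.
- exact: immune1_of_T1 hn.
- exact: suffers1_of_notT1 hh hn.
- exact: immune2_of_T2 hn.
- exact: suffers2_of_notT2 hh hn.
- exact: immune3_of_T3 hn.
- exact: suffers3_of_notT3 hh hn.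
Qed.
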